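(* Let $N\geq2$ and $[\![N]\!]=\{1,\dots,N\}$. Let $x_1,\dots,x_N$ and $A_I$ ($I\subset[\![N]\!]$) be indeterminates, and let $K$ be the field of rational functions in them over $\mathbb{Q}$. For $k\in[\![N]\!]$ let $E_k$ be the map sending a tuple $(y_1,\dots,y_N)\in K^N$ with $y_k\neq0$ to $(y_1,\dots,y_{k-1},\overline{y_k},y_{k+1},\dots,y_N)$, where $$\overline{y_k}=\Big(\sum_{i\neq k}y_i^2+\sum_{I\subset[\![N]\!]\smallsetminus\{k\}}A_I\prod_{i\in I}y_i\Big)\Big/y_k .$$ Let $G$ be the group generated by the involutions $E_1,\dots,E_N$ acting (birationally) in this way. Then for every $g\in G$, each coordinate of $g\cdot(x_1,\dots,x_N)$ is a polynomial with integer coefficients in the variables $x_1^{\pm1},\dots,x_N^{\pm1}$ and $\{A_I\}_{I\subsetneq[\![N]\!]}$, the coefficients depending only on $g$.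
   Context: The maps $E_k$ are the birational involutions of $\mathbb{C}^N$ exchanging the two roots, in the $k$-th variable, of the Markoff-type equation $\sum_{i=1}^N X_i^2+\sum_{I\subset[\![N]\!]}A_I\prod_{i\in I}X_i=0$ (monic of degree $2$ in each variable); $G$ is the free product of $N$ copies of $\mathbb{Z}/2\mathbb{Z}$ acting through them. Note that $A_{[\![N]\!]}$ does not appear in the formula for any $E_k$. *)

From HB Require Import structures.
From mathcomp Require Import all_boot all_order all_algebra.
From mathcomp Require Import fraction.
From mathcomp Require Import mpoly.
Set Implicit Arguments.
Unset Strict Implicit.
Unset Printing Implicit Defensive.
Import Order.TTheory GRing.Theory Num.Theory.
Local Open Scope ring_scope.

(* Indeterminates: x_1..x_N and A_I for every I ⊂ [N] (all 2^N subsets).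
   Variable indices of the polynomial ring: 'I_(N + #|{set 'I_N}|). *)
Notation "x %:F" := (@FracField.tofrac _ x) : ring_scope.

Definition nvars (N : nat) : nat := (N + #|{set 'I_N}|)%N.

Definition xidx (N : nat) (i : 'I_N) : 'I_(nvars N) := lshift _ i.
Definition aidx (N : nat) (I : {set 'I_N}) : 'I_(nvars N) := rshift N (enum_rank I).

Definition K (N : nat) := {fraction {mpoly rat[nvars N]}}.

Definition xK (N : nat) (i : 'I_N) : K N := ('X_(xidx i))%:F.
Definition AK (N : nat) (I : {set 'I_N}) : K N := ('X_(aidx I))%:F.

Definition xvec (N : nat) : 'I_N -> K N := fun i => xK i.

Definition Ebar (N : nat) (k : 'I_N) (y : 'I_N -> K N) : K N :=
  (\sum_(i : 'I_N | i != k) y i ^+ 2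
   + \sum_(I : {set 'I_N} | k \notin I) AK I * \prod_(i in I) y i) / y k.

Definition Ek (N : nat) (k : 'I_N) (y : 'I_N -> K N) : option ('I_N -> K N) :=
  if y k == 0 then None
  else Some (fun j => if j == k then Ebar k y else y j).

(* An element of G (free product of N copies of Z/2) is a reduced word
   [:: k1; ...; km] (no two consecutive equal letters); it acts as
   E_{k1} o ... o E_{km}, the result being None if some division by 0
   occurs along the way. *)
Definition reduced_word (N : nat) (w : seq 'I_N) : bool :=
  sorted (fun a b : 'I_N => a != b) w.

Definition act (N : nat) (w : seq 'I_N) (y : 'I_N -> K N) : option ('I_N -> K N) :=
  foldr (fun k oy => obind (Ek k) oy) (Some y) w.

(* f lies in Z[x_1^{±1}, ..., x_N^{±1}, A_I (I ⊊ [N])]: f times some monomial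
   in the x_i is the image of an integer polynomial not involving A_[N]. *)
Definition int_laurent (N : nat) (f : K N) : Prop :=
  exists (P : {mpoly int[nvars N]}) (d : 'I_N -> nat),
    (forall m, m \in msupp P -> m (aidx [set: 'I_N]) = 0%N) /\
    f * \prod_(i : 'I_N) xK i ^+ d i
      = (map_mpoly (fun z : int => z%:~R : rat) P)%:F.

From HB Require Import structures.
From mathcomp Require Import all_boot all_order all_algebra.
From mathcomp Require Import fraction.
From mathcomp Require Import mpoly.
From mathcomp Require Import ring.
Set Implicit Arguments.
Unset Strict Implicit.
Unset Printing Implicit Defensive.
Import Order.TTheory GRing.Theory Num.Theory.
Local Open Scope ring_scope.

(* Let Φ(y) = Σ y_i² + Σ_{I ≠ [N]} A_I ∏_{i∈I} y_i be the Markoff-type form without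
   its A_[N] term. The generic point satisfies Φ(x) = λ ∏ x_i for the Laurent polynomial
   λ = Φ(x) / ∏ x_i, which does not involve A_[N]. As a monic quadratic in y_k,
   Φ(y) − λ ∏ y_i has the roots y_k and ȳ_k, so by Vieta ȳ_k = λ ∏_{i≠k} y_i − B_k(y) − y_k,
   where B_k(y) is the coefficient of y_k in Φ(y). Hence each E_k preserves both the
   relation Φ(y) = λ ∏ y_i and the Laurent property. The divisions by y_k are legitimate
   because every coordinate stays a quotient of two polynomials positive at (1,…,1). *)

Section VarFree.
Variables (R : nzRingType) (n : nat) (j : 'I_n).

Definition var_free_pred (p : {mpoly R[n]}) : bool :=
  all (fun m : 'X_{1..n} => m j == 0%N) (msupp p).
Definition var_free := [qualify a p | var_free_pred p].

Lemma var_freeP (p : {mpoly R[n]}) :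
  reflect {in msupp p, forall m : 'X_{1..n}, m j = 0%N} (p \is a var_free).
Proof. by apply: (iffP allP) => h m /h /eqP. Qed.

Fact var_free_subring_closed : subring_closed var_free.
Proof.
split.
- by apply/var_freeP => m; rewrite msupp1 inE => /eqP ->; rewrite mnm0E.
- move=> p q /var_freeP hp /var_freeP hq; apply/var_freeP => m /msuppB_le.
  by rewrite mem_cat => /orP[/hp | /hq].
- move=> p q /var_freeP hp /var_freeP hq; apply/var_freeP => m /msuppM_le.
  by case/allpairsP => -[m1 m2] /= [/hp h1 /hq h2 ->]; rewrite mnmDE h1 h2.
Qed.
HB.instance Definition _ := GRing.isSubringClosed.Build {mpoly R[n]}
  var_free_pred var_free_subring_closed.

Lemma var_freeX i : i != j -> 'X_i \is a var_free.
Proof.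
move=> ij; apply/var_freeP => m; rewrite msuppX inE => /eqP ->.
by rewrite mnm1E (negbTE ij).
Qed.

End VarFree.
Arguments var_free {R n} j.

Section PositiveAt.
Variables (R : realFieldType) (n : nat) (v : 'I_n -> R).
Local Notation RF := {fraction {mpoly R[n]}}.

Definition pos_at (f : RF) : Prop :=
  exists p q : {mpoly R[n]}, [/\ 0 < p.@[v], 0 < q.@[v] & f = p%:F / q%:F].

Lemma tofrac_pos_neq0 (p : {mpoly R[n]}) : 0 < p.@[v] -> (p%:F : RF) != 0.
Proof.
by move=> hp; rewrite tofrac_eq0; apply: contraTneq hp => ->; rewrite meval0 ltxx.
Qed.

Lemma pos_at_neq0 f : pos_at f -> f != 0.
Proof.
by move=> [p [q [hp hq ->]]]; rewrite mulf_neq0 ?invr_eq0 ?tofrac_pos_neq0.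
Qed.

Lemma pos_atX i : 0 < v i -> pos_at ('X_i)%:F.
Proof. by exists 'X_i, 1; rewrite mevalXU meval1 tofrac1 divr1. Qed.

Lemma pos_at1 : pos_at 1.
Proof. by exists 1, 1; rewrite meval1 tofrac1 divr1. Qed.

Lemma pos_atD f g : pos_at f -> pos_at g -> pos_at (f + g).
Proof.
move=> [p1 [q1 [p1v q1v ->]]] [p2 [q2 [p2v q2v ->]]].
exists (p1 * q2 + p2 * q1), (q1 * q2); split.
- by rewrite mevalD !mevalM addr_gt0 ?mulr_gt0.
- by rewrite mevalM mulr_gt0.
- by rewrite addf_div ?tofrac_pos_neq0 // tofracD !tofracM.
Qed.

Lemma pos_atM f g : pos_at f -> pos_at g -> pos_at (f * g).
Proof.
move=> [p1 [q1 [p1v q1v ->]]] [p2 [q2 [p2v q2v ->]]].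
exists (p1 * p2), (q1 * q2); split; rewrite ?mevalM ?mulr_gt0 //.
by rewrite mulf_div !tofracM.
Qed.

Lemma pos_atV f : pos_at f -> pos_at f^-1.
Proof. by move=> [p [q [pv qv ->]]]; exists q, p; rewrite invf_div. Qed.

Lemma pos_at_prod (I : Type) (r : seq I) (P : pred I) (G : I -> RF) :
  (forall i, P i -> pos_at (G i)) -> pos_at (\prod_(i <- r | P i) G i).
Proof. by move=> hG; apply: big_ind => //; [exact: pos_at1 | exact: pos_atM]. Qed.

Lemma pos_at_sum_addr (I : Type) (r : seq I) (P : pred I) (G : I -> RF) f :
  pos_at f -> (forall i, P i -> pos_at (G i)) -> pos_at (\sum_(i <- r | P i) G i + f).
Proof.
move=> hf hG; elim/big_rec: _ => [|i s Pi IH]; first by rewrite add0r.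
by rewrite -addrA; apply: pos_atD; first exact: hG.
Qed.

End PositiveAt.

Section MarkoffForm.
Variables (F : fieldType) (N : nat) (A : {set 'I_N} -> F).
Implicit Types (y : 'I_N -> F) (k : 'I_N) (lam : F).

Definition markoff_form y : F :=
  \sum_i y i ^+ 2 + \sum_(I : {set 'I_N} | I != setT) A I * \prod_(i in I) y i.

Definition lin_coef k y : F :=
  \sum_(I : {set 'I_N} | (I != setT) && (k \in I)) A I * \prod_(i in I | i != k) y i.

Definition const_coef k y : F :=
  \sum_(i | i != k) y i ^+ 2 + \sum_(I : {set 'I_N} | k \notin I) A I * \prod_(i in I) y i.

Definition ebar k y : F := const_coef k y / y k.

Lemma markoff_form_coordE k y :
  markoff_form y = y k ^+ 2 + y k * lin_coef k y + const_coef k y.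
Proof.
rewrite /markoff_form /const_coef (bigD1 k) //= (bigID (fun I : {set 'I_N} => k \in I)) /=.
have -> : \sum_(I : {set 'I_N} | (I != setT) && (k \notin I)) A I * \prod_(i in I) y i
        = \sum_(I : {set 'I_N} | k \notin I) A I * \prod_(i in I) y i.
  apply: eq_bigl => I; rewrite andbC; case: (boolP (k \in I)) => //= kI.
  by apply: contraNneq kI => ->; rewrite inE.
rewrite -!addrA; congr (_ + _); rewrite [LHS]addrCA; congr (_ + _).
rewrite /lin_coef big_distrr; apply: eq_bigr => I /andP[_ kI].
by rewrite (bigD1 k) //= mulrCA.
Qed.

Lemma prod_coordE k y : \prod_i y i = y k * \prod_(i | i != k) y i.
Proof. exact: bigD1. Qed.

Lemma eq_lin_coef k y y' :
  (forall j, j != k -> y j = y' j) -> lin_coef k y = lin_coef k y'.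
Proof.
by move=> yy'; apply: eq_bigr => I _; congr (_ * _); apply: eq_bigr => i /andP[_ /yy'].
Qed.

Lemma eq_const_coef k y y' :
  (forall j, j != k -> y j = y' j) -> const_coef k y = const_coef k y'.
Proof.
move=> yy'; congr (_ + _); first by apply: eq_bigr => i /yy' ->.
apply: eq_bigr => I kI; congr (_ * _); apply: eq_bigr => i iI; apply: yy'.
by apply: contraNneq kI => <-.
Qed.

Lemma ebar_vieta lam k y : y k != 0 -> markoff_form y = lam * \prod_i y i ->
  ebar k y = lam * \prod_(i | i != k) y i - lin_coef k y - y k.
Proof.
move=> yk0 hy; apply: (mulfI yk0).
have -> : y k * ebar k y = const_coef k y by rewrite mulrC divfK.
apply: (addrI (y k ^+ 2 + y k * lin_coef k y)).
by rewrite -markoff_form_coordE hy (prod_coordE k); ring.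
Qed.

Lemma markoff_form_ebar lam k y y' :
  y k != 0 -> markoff_form y = lam * \prod_i y i ->
  y' k = ebar k y -> (forall j, j != k -> y' j = y j) ->
  markoff_form y' = lam * \prod_i y' i.
Proof.
move=> yk0 hy y'k y'E; have vieta := ebar_vieta yk0 hy.
have hC : const_coef k y = ebar k y * y k by rewrite divfK.
rewrite (markoff_form_coordE k) (prod_coordE k) (eq_bigr _ y'E).
rewrite (eq_lin_coef y'E) (eq_const_coef y'E) y'k hC vieta; ring.
Qed.

End MarkoffForm.

Section GenericOrbit.
Variable N : nat.
Local Notation n := (nvars N).
Local Notation A_free := (var_free (aidx [set: 'I_N])).
Implicit Types (f g : K N) (y : 'I_N -> K N) (i k : 'I_N) (I : {set 'I_N}).

Definition int_to_K : {mpoly int[n]} -> K N :=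
  (@FracField.tofrac _) \o map_mpoly (fun z : int => z%:~R : rat).
HB.instance Definition _ := GRing.RMorphism.on int_to_K.

Definition x_monomial (d : 'I_N -> nat) : K N := \prod_i xK i ^+ d i.
Definition x_monomial_poly (d : 'I_N -> nat) : {mpoly int[n]} :=
  \prod_i 'X_(xidx i) ^+ d i.

Lemma int_laurentE f : int_laurent f <->
  exists2 P, P \is a A_free & exists d, f * x_monomial d = int_to_K P.
Proof.
split=> [[P [d [/var_freeP hP eP]]] | [P /var_freeP hP [d eP]]];
  by [exists P => //; exists d | exists P, d].
Qed.

Lemma xidx_neq_aidx i I : xidx i != aidx I :> 'I_n.
Proof.
apply/eqP => /(congr1 val) /= iI.
by have := ltn_ord i; rewrite iI ltnNge leq_addr.
Qed.

Lemma aidx_inj : injective (@aidx N).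
Proof. by move=> I J /(congr1 val) /addnI /val_inj /enum_rank_inj. Qed.

Lemma int_to_K_X (j : 'I_n) : int_to_K 'X_j = ('X_j)%:F.
Proof. by rewrite /int_to_K /= map_mpolyX. Qed.

Lemma x_monomialE d : x_monomial d = int_to_K (x_monomial_poly d).
Proof. by rewrite rmorph_prod; apply: eq_bigr => i _; rewrite rmorphXn /xK -int_to_K_X. Qed.

Lemma x_monomial_poly_A_free d : x_monomial_poly d \is a A_free.
Proof. by apply: rpred_prod => i _; rewrite rpredX ?var_freeX ?xidx_neq_aidx. Qed.

Lemma x_monomialD d e :
  x_monomial (fun i => d i + e i)%N = x_monomial d * x_monomial e.
Proof. by rewrite -big_split; apply: eq_bigr => i _; rewrite exprD. Qed.

Lemma int_laurent_poly P : P \is a A_free -> int_laurent (int_to_K P).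
Proof.
move=> hP; apply/int_laurentE; exists P => //.
by exists (fun=> 0%N); rewrite /x_monomial big1 ?mulr1.
Qed.

Lemma int_laurentD f g : int_laurent f -> int_laurent g -> int_laurent (f + g).
Proof.
move=> /int_laurentE[P hP [d eP]] /int_laurentE[Q hQ [e eQ]].
apply/int_laurentE.
exists (P * x_monomial_poly e + Q * x_monomial_poly d).
  by rewrite rpredD ?rpredM ?x_monomial_poly_A_free.
exists (fun i => d i + e i)%N.
by rewrite rmorphD !rmorphM /= -!x_monomialE -eP -eQ x_monomialD; ring.
Qed.

Lemma int_laurentM f g : int_laurent f -> int_laurent g -> int_laurent (f * g).
Proof.
move=> /int_laurentE[P hP [d eP]] /int_laurentE[Q hQ [e eQ]].
apply/int_laurentE; exists (P * Q); first exact: rpredM.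
by exists (fun i => d i + e i)%N; rewrite rmorphM /= -eP -eQ x_monomialD; ring.
Qed.

Lemma int_laurentN f : int_laurent f -> int_laurent (- f).
Proof.
move=> hf; rewrite -mulN1r -(rmorphN1 int_to_K).
by apply: int_laurentM => //; apply/int_laurent_poly/rpredN1.
Qed.

Lemma int_laurent_sum (T : Type) (r : seq T) (P : pred T) (G : T -> K N) :
  (forall t, P t -> int_laurent (G t)) -> int_laurent (\sum_(t <- r | P t) G t).
Proof.
move=> hG; apply: big_ind => //; last exact: int_laurentD.
by rewrite -(rmorph0 int_to_K); apply/int_laurent_poly/rpred0.
Qed.

Lemma int_laurent_prod (T : Type) (r : seq T) (P : pred T) (G : T -> K N) :
  (forall t, P t -> int_laurent (G t)) -> int_laurent (\prod_(t <- r | P t) G t).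
Proof.
move=> hG; apply: big_ind => //; last exact: int_laurentM.
by rewrite -(rmorph1 int_to_K); apply/int_laurent_poly/rpred1.
Qed.

Lemma int_laurent_x i : int_laurent (xK i).
Proof. by rewrite /xK -int_to_K_X; apply/int_laurent_poly/var_freeX/xidx_neq_aidx. Qed.

Lemma int_laurent_A I : I != [set: 'I_N] -> int_laurent (AK I).
Proof.
move=> IT; rewrite /AK -int_to_K_X; apply/int_laurent_poly/var_freeX.
by rewrite (inj_eq aidx_inj).
Qed.

Definition ones : 'I_n -> rat := fun=> 1.

Lemma pos_AK I : pos_at ones (AK I).
Proof. exact/pos_atX/ltr01. Qed.

Lemma pos_xK i : pos_at ones (xK i).
Proof. exact/pos_atX/ltr01. Qed.

Lemma int_laurent_xV i : int_laurent (xK i)^-1.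
Proof.
apply/int_laurentE; exists 1; first exact: rpred1.
exists (fun j => (j == i) : nat); rewrite rmorph1 /x_monomial (bigD1 i) //= eqxx expr1.
by rewrite big1 ?mulr1 ?mulVf ?(pos_at_neq0 (pos_xK i)) // => j /negbTE ->.
Qed.

Lemma int_laurent_markoff_form y :
  (forall i, int_laurent (y i)) -> int_laurent (markoff_form (@AK N) y).
Proof.
move=> hy; apply: int_laurentD; first by apply: int_laurent_sum => i _; apply/int_laurentM.
apply: int_laurent_sum => I IT; apply: int_laurentM; first exact: int_laurent_A.
exact: int_laurent_prod.
Qed.

Lemma int_laurent_lin_coef k y :
  (forall i, int_laurent (y i)) -> int_laurent (lin_coef (@AK N) k y).
Proof.
move=> hy; apply: int_laurent_sum => I /andP[IT _]; apply: int_laurentM.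
  exact: int_laurent_A.
exact: int_laurent_prod.
Qed.

Lemma pos_const_coef k y :
  (forall i, pos_at ones (y i)) -> pos_at ones (const_coef (@AK N) k y).
Proof.
move=> hy; rewrite /const_coef (bigD1 set0) ?inE //= big_set0 mulr1.
apply: pos_at_sum_addr => [|i _]; last exact: pos_atM.
rewrite addrC; apply: pos_at_sum_addr => [|I _]; first exact: pos_AK.
by apply: pos_atM; [exact: pos_AK | exact: pos_at_prod].
Qed.

(* In the paper's equation, -lam takes the place of A_[N]. *)
Definition lam : K N := markoff_form (@AK N) (@xvec N) / \prod_i xK i.

Definition admissible (y : 'I_N -> K N) : Prop :=
  [/\ forall i, pos_at ones (y i), forall i, int_laurent (y i)
    & markoff_form (@AK N) y = lam * \prod_i y i].

Lemma admissible_xvec : admissible (@xvec N).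
Proof.
split=> [i|i|]; [exact: pos_xK | exact: int_laurent_x |].
by rewrite /lam divfK //; apply/prodf_neq0 => i _; apply/pos_at_neq0/pos_xK.
Qed.

Lemma int_laurent_lam : int_laurent lam.
Proof.
apply: int_laurentM; first exact/int_laurent_markoff_form/int_laurent_x.
by rewrite -prodfV; apply: int_laurent_prod => i _; apply: int_laurent_xV.
Qed.

Lemma Ek_admissible k y : admissible y -> exists2 y', Ek k y = Some y' & admissible y'.
Proof.
move=> [ypos ylaur yrel]; have yk0 := pos_at_neq0 (ypos k).
rewrite /Ek (negbTE yk0); eexists; first reflexivity.
have y'E j : j != k -> (if j == k then Ebar k y else y j) = y j by move/negbTE ->.
split=> [j|j|]; last by apply: (markoff_form_ebar yk0 yrel _ y'E); rewrite eqxx.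
- case: eqP => _; last exact: ypos.
  by apply: pos_atM; [exact: pos_const_coef | exact: pos_atV].
- case: eqP => _; last exact: ylaur.
  rewrite [Ebar k y](ebar_vieta yk0 yrel); apply/int_laurentD/int_laurentN => //.
  apply/int_laurentD/int_laurentN/int_laurent_lin_coef => //.
  by apply: int_laurentM; [exact: int_laurent_lam | exact: int_laurent_prod].
Qed.

Lemma act_admissible w : exists2 y, act w (@xvec N) = Some y & admissible y.
Proof.
elim: w => [|k w [y wy yadm]]; first by exists (@xvec N); last exact: admissible_xvec.
by rewrite /act /= -/(act w _) wy /=; apply: Ek_admissible.
Qed.

End GenericOrbit.

Theorem proposition11 (N : nat) (hN : (2 <= N)%N) (w : seq 'I_N) :
  reduced_word w ->
  exists y : 'I_N -> K N,
    act w (@xvec N) = Some y /\ forall i : 'I_N, int_laurent (y i).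
Proof.
move=> _; have [y wy [_ ylaur _]] := act_admissible w.
by exists y.
Qed.
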